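(* Let $\mathbf{w} = (w_1, w_2, \ldots)$ be a sequence of words in $A^+$ (with $A=\{a,b\}$) such that for every $n \in \mathbb{N}$ there are no $s, t, v \in A^*$ with $w_n = stv$ and $st, tv \in S_{\mathbf{w}}$. For each $n$, let $p_n$ and $s_n$ be respectively the longest prefix and the longest suffix of $w_n$ belonging to $S_{\mathbf{w}}$. Then for every $n$ there exists $u_n \in A^+$ such that $w_n = p_n u_n s_n$.
   Context: $A = \{a,b\}$; $A^*$ is the free monoid on $A$ with empty word $\varepsilon$ (which is a prefix and a suffix of every word), and $A^+ = A^*\setminus\{\varepsilon\}$. For a sequence $\mathbf{w}=(w_1,w_2,\ldots)$ in $A^+$, $S_{\mathbf{w}}$ is the least submonoid $S$ of $A^*$ satisfying: (C1) if $w_n = s v u v s'$ for some $n$, with $s, s' \in S$ and $u, v \in A^*$, then $v \in S$; (C2) if $w_m = s v t$ and $w_n = t' v s'$ for some $m \neq n$, with $s, s' \in S$ and $t, t', v \in A^*$, then $v \in S$. *)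

From Stdlib Require Import List.
Import ListNotations.

Inductive letter : Type := la | lb.

Definition word := list letter.

(** S_w : the least submonoid of A^* closed under (C1) and (C2),
    for a sequence w : nat -> word (indexed from 0). *)
Inductive Sw (w : nat -> word) : word -> Prop :=
| Sw_nil : Sw w []
| Sw_cat : forall x y, Sw w x -> Sw w y -> Sw w (x ++ y)
| Sw_C1 : forall n s s' u v,
    w n = s ++ v ++ u ++ v ++ s' -> Sw w s -> Sw w s' -> Sw w v
| Sw_C2 : forall m n s s' t t' v,
    m <> n -> w m = s ++ v ++ t -> w n = t' ++ v ++ s' ->
    Sw w s -> Sw w s' -> Sw w v.

Definition longest_prefix_in (w : nat -> word) (x p : word) : Prop :=
  (exists r, x = p ++ r) /\ Sw w p /\
  (forall q r, x = q ++ r -> Sw w q -> length q <= length p).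

Definition longest_suffix_in (w : nat -> word) (x s : word) : Prop :=
  (exists r, x = r ++ s) /\ Sw w s /\
  (forall q r, x = r ++ q -> Sw w q -> length q <= length s).

From Stdlib Require Import List.
Import ListNotations.

Lemma prefix_suffix_overlap_or_gap {A : Type} (x p s r1 r2 : list A) :
  x = p ++ r1 -> x = r2 ++ s ->
  (exists a t b, x = a ++ t ++ b /\ p = a ++ t /\ s = t ++ b)
  \/ exists u, u <> [] /\ x = p ++ u ++ s.
Proof.
  intros Hp Hs.
  assert (E : p ++ r1 = r2 ++ s) by congruence.
  destruct (app_eq_app _ _ _ _ E) as [l [[Ep Es] | [Er2 Er1]]].
  - left. exists r2, l, r1. subst. rewrite <- app_assoc. auto.
  - destruct l as [|c l].
    + left. exists p, [], s. subst. rewrite app_nil_r in *. auto.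
    + right. exists (c :: l). split; [discriminate|]. rewrite Hp, Er1. reflexivity.
Qed.

Theorem lemma3p5 (w : nat -> word)
  (hw : forall n, w n <> [])
  (hno : forall n, ~ (exists s t v : word,
           w n = s ++ t ++ v /\ Sw w (s ++ t) /\ Sw w (t ++ v))) :
  forall n (p s : word),
    longest_prefix_in w (w n) p -> longest_suffix_in w (w n) s ->
    exists u : word, u <> [] /\ w n = p ++ u ++ s.
Proof.
  intros n p s [[r1 Hp] [Sp _]] [[r2 Hs] [Ss _]].
  destruct (prefix_suffix_overlap_or_gap _ _ _ _ _ Hp Hs)
    as [[a [t [b [Ew [-> ->]]]]] | gap]; [|exact gap].
  exfalso. apply (hno n). exists a, t, b. auto.
Qed.
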